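(* Let $w=(w_k)_{k\ge0}$ be a weight sequence with $w_0>0$ and $\omega<\infty$. Suppose that $n\to\infty$ and $m=m(n)$ with $m/n\to\lambda>0$. Then $Y_{(j)}=\omega$ with probability tending to $1$, for every fixed $j$.
   Context: A weight sequence is a sequence $w=(w_k)_{k\ge0}$ of nonnegative reals; $\omega=\sup\{k:w_k>0\}$. Balls-in-boxes: $\mathcal B_{m,n}=\{(y_1,\dots,y_n)\in\{0,1,\dots\}^n:\sum y_i=m\}$, weight $w(y)=\prod_iw_{y_i}$, $Z(m,n)=\sum_{y\in\mathcal B_{m,n}}w(y)$; when $Z(m,n)>0$, $B_{m,n}=(Y_1,\dots,Y_n)$ is random with $P(B_{m,n}=y)=w(y)/Z(m,n)$ (only $m,n$ with $Z(m,n)>0$ are considered). $Y_{(1)}\ge Y_{(2)}\ge\dots\ge Y_{(n)}$ denote $Y_1,\dots,Y_n$ arranged in decreasing order. *)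

From HB Require Import structures.
From mathcomp Require Import all_boot all_order all_algebra.
From mathcomp Require Import all_classical all_reals all_analysis.
Set Implicit Arguments. Unset Strict Implicit. Unset Printing Implicit Defensive.
Import Order.TTheory GRing.Theory Num.Theory.
Local Open Scope ring_scope.

(* Configurations y = (y_1,...,y_n) with y_i in {0,...,m}; B_{m,n} is the
   subset of those with sum m (any y with sum m has all y_i <= m). *)
Definition config (m n : nat) := {ffun 'I_n -> 'I_m.+1}.

Definition in_Bmn (m n : nat) (y : config m n) : bool :=
  (\sum_(i < n) nat_of_ord (y i))%N == m.

Definition bweight (R : realType) (w : nat -> R) (m n : nat) (y : config m n) : R :=
  \prod_(i < n) w (nat_of_ord (y i)).

Definition Zpart (R : realType) (w : nat -> R) (m n : nat) : R :=
  \sum_(y : config m n | in_Bmn y) bweight w y.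

Definition order_stat (m n : nat) (y : config m n) (j : nat) : nat :=
  nth 0%N (sort geq [seq nat_of_ord (y i) | i <- enum 'I_n]) j.-1.

Definition bprob (R : realType) (w : nat -> R) (m n : nat) (A : config m n -> bool) : R :=
  (\sum_(y : config m n | in_Bmn y && A y) bweight w y) / Zpart w m n.

From HB Require Import structures.
From mathcomp Require Import all_boot all_order all_algebra.
From mathcomp Require Import all_classical all_reals all_analysis.
From mathcomp Require Import zify lra.
Import Order.TTheory GRing.Theory Num.Theory.
Import numFieldNormedType.Exports.

Set Implicit Arguments.
Unset Strict Implicit.
Unset Printing Implicit Defensive.

(* Write omega = o + 1; omega = 0 is excluded since then Z > 0 forces m = 0.
   A configuration of positive weight with Y_(j) <> omega has fewer than j
   boxes holding omega balls, so once m >= n / q some value 0 < a < omega fills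
   K ~ n / Q boxes.  Refilling omega of these boxes as a full boxes (omega
   balls) and omega - a empty ones keeps the ball count and changes the weight
   by a bounded factor, and there are at least (K - omega)^omega ~ n^omega such
   switchings.  Conversely the switched configuration and the switching data
   determine the original one, and the first switched box is full, so each
   configuration arises from at most omega (j + o) n^o switchings.  Double
   counting gives P(Y_(j) <> omega) = O(1 / n). *)

Lemma count_mem_sorted_geq (s : seq nat) (v j : nat) :
  sorted geq s -> all (fun x => x <= v) s -> nth 0 s j != v -> count_mem v s <= j.
Proof.
elim: s j => [|x s IHs] j //= x_s /andP[x_le_v s_le_v].
have [s_le_x sorted_s] : all (geq x) s /\ sorted geq s.
  by apply/andP; rewrite -path_sortedE //; apply: rev_trans leq_trans.
case: j => [|j] /= x_neq_v; last by rewrite -add1n leq_add ?leq_b1 ?IHs.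
rewrite (negbTE x_neq_v) add0n leqn0; apply/eqP/count_memPn/negP => v_s.
by case/eqP: x_neq_v; apply/eqP; rewrite eqn_leq x_le_v; exact: (allP s_le_x).
Qed.

Section ValueCounts.
Variables m n : nat.
Implicit Types x : config m n.

Definition value_set x (v : nat) : {set 'I_n} := [set i | x i == v :> nat].
Definition value_count x v := #|value_set x v|.

Lemma value_count_sum x v : value_count x v = \sum_(i < n) (x i == v :> nat).
Proof.
by rewrite /value_count -sum1_card big_mkcond /=; apply: eq_bigr => i _; rewrite inE; case: eqP.
Qed.

Lemma value_count_seq x v : value_count x v = count_mem v [seq nat_of_ord (x i) | i <- enum 'I_n].
Proof.
rewrite value_count_sum count_map -sum1_count big_enum_cond [RHS]big_mkcond.
by apply: eq_bigr => i _; rewrite inE /=; case: (_ == _).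
Qed.

Lemma value_count_lt_order_stat x j v : 0 < j -> (forall i, x i <= v) ->
  order_stat x j != v -> value_count x v < j.
Proof.
move=> j_gt0 x_le_v os_neq_v; rewrite -(prednK j_gt0) ltnS value_count_seq -(count_sort geq).
apply: count_mem_sorted_geq os_neq_v; first by apply: sort_sorted => a b; exact: leq_total.
by rewrite all_sort; apply/allP => _ /mapP[i _ ->].
Qed.

Lemma sum_config_values x N : (forall i, x i < N) ->
  \sum_(i < n) x i = \sum_(a < N) a * value_count x a.
Proof.
move=> x_lt; under [RHS]eq_bigr do rewrite value_count_sum big_distrr.
rewrite exchange_big; apply: eq_bigr => i _ /=.
rewrite (bigD1 (Ordinal (x_lt i))) //= eqxx muln1 big1 ?addn0 // => a.
by rewrite -val_eqE /= eq_sym => /negPf ->; rewrite muln0.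
Qed.

Lemma frequent_intermediate_value x omega j K : 0 < omega -> (forall i, x i <= omega) ->
  in_Bmn x -> value_count x omega < j -> omega * j + omega * omega * K <= m ->
  exists2 a, 0 < a < omega & K <= value_count x a.
Proof.
move=> omega_gt0 x_le /eqP sum_x cnt_lt m_ge.
have [/existsP[a /andP[a_gt0 K_le]]|] :=
  boolP [exists a : 'I_omega, (0 < a) && (K <= value_count x a)].
  by exists a; rewrite ?a_gt0 /=.
rewrite negb_exists => /forallP rare.
have : m <= omega * j.-1 + omega * (omega * K.-1).
  rewrite -sum_x (@sum_config_values x omega.+1) // big_ord_recr /= addnC.
  rewrite leq_add ?leq_mul2l //; first by rewrite -ltnS prednK //; lia.
  apply: leq_trans (_ : \sum_(a < omega) omega * K.-1 <= _); last by rewrite sum_nat_const card_ord.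
  apply: leq_sum => a _; have := rare a; case: posnP => [-> //|a_gt0] /=.
  by rewrite -ltnNge => cnt_lt_K; rewrite leq_mul ?(ltnW (ltn_ord a)) // -ltnS (ltn_predK cnt_lt_K).
have j_gt0 : 0 < j := leq_ltn_trans (leq0n _) cnt_lt.
nia.
Qed.
End ValueCounts.

Lemma big_split_injective_image (R : Type) (idx : R) (op : Monoid.com_law idx)
    (I J : finType) (g : I -> J) (F : J -> R) : injective g ->
  \big[op/idx]_j F j = op (\big[op/idx]_i F (g i)) (\big[op/idx]_(j in ~: (g @: [set: I])) F j).
Proof.
move=> g_inj; rewrite (bigID (mem (g @: [set: I]))) /=; congr (op _ _).
  by rewrite big_imset /=; [apply: eq_bigl => i; rewrite inE | by move=> ? ? _ _ /g_inj].
by apply: eq_bigl => j; rewrite inE.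
Qed.

Lemma expn_subn_leq_ffact N p : (N - p) ^ p <= N ^_ p.
Proof.
rewrite ffact_prod -{2}(card_ord p) -prod_nat_const.
by apply: leq_prod => i _; rewrite leq_sub2l // ltnW.
Qed.

Lemma card_ffun_ord0_in (T : finType) k (S : {set T}) :
  #|[set g : {ffun 'I_k.+1 -> T} | g ord0 \in S]| <= #|S| * #|T| ^ k.
Proof.
pose split_head (g : {ffun 'I_k.+1 -> T}) := (g ord0, [ffun i : 'I_k => g (lift ord0 i)]).
have split_head_inj : injective split_head.
  move=> g1 g2 [g12_0 /ffunP g12]; apply/ffunP => i.
  by case: (unliftP ord0 i) => [i' ->|->] //; have := g12 i'; rewrite !ffunE.
rewrite -(card_imset _ split_head_inj).
apply: leq_trans (_ : #|finset.setX S [set: {ffun 'I_k -> T}]| <= _); last first.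
  by rewrite cardsX cardsT card_ffun card_ord.
apply/subset_leq_card/fintype.subsetP => p /imsetP[g]; rewrite inE => g0_S ->.
by rewrite !inE /= g0_S.
Qed.

Section Switching.
Variables m n o : nat.
Local Notation omega := o.+1.
Implicit Types (x y : config m n) (a : 'I_omega) (g : {ffun 'I_omega -> 'I_n}).

(* Boxes g 0, ..., g (a - 1) receive omega balls and the other boxes of the
   image of g are emptied: the ball count is kept when each g k held a balls. *)
Definition switch x a g : config m n :=
  [ffun i => if [pick k | g k == i] is Some k
             then (if k < a then inord omega else ord0) else x i].

Definition unswitch y a g : config m n :=
  [ffun i => if [pick k | g k == i] is Some _ then inord a else y i].

Definition switchable x a g : bool :=
  [&& 0 < a, injectiveb g & [forall k, x (g k) == a :> nat]].

Lemma pick_preimage_image g k : injective g -> [pick k' | g k' == g k] = Some k.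
Proof. by move=> g_inj; case: pickP => [k' /eqP/g_inj -> //|/(_ k)]; rewrite eqxx. Qed.

Lemma pick_preimage_notin g i : i \notin g @: [set: 'I_omega] -> [pick k | g k == i] = None.
Proof. by move=> i_notin; case: pickP => // k /eqP gk; case/negP: i_notin; rewrite -gk imset_f. Qed.

Lemma switch_image x a g k : injective g ->
  switch x a g (g k) = if k < a then inord omega else ord0.
Proof. by move=> g_inj; rewrite ffunE pick_preimage_image. Qed.

Lemma switch_notin x a g i : i \notin g @: [set: 'I_omega] -> switch x a g i = x i.
Proof. by move=> i_notin; rewrite ffunE pick_preimage_notin. Qed.

Lemma switchK x a g : omega <= m -> switchable x a g -> unswitch (switch x a g) a g = x.
Proof.
move=> omega_le_m /and3P[_ _ /forallP x_g]; apply/ffunP => i; rewrite !ffunE.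
case: pickP => [k /eqP <-|//]; apply: val_inj => /=.
have a_lt : a < m.+1 by rewrite ltnS (leq_trans _ omega_le_m) // ltnW.
by rewrite inordK //; apply/esym/eqP/x_g.
Qed.

Lemma switch_in_Bmn x a g : omega <= m -> switchable x a g -> in_Bmn x -> in_Bmn (switch x a g).
Proof.
move=> omega_le_m /and3P[_ /injectiveP g_inj /forallP x_g]; rewrite /in_Bmn.
suff -> : \sum_(i < n) switch x a g i = \sum_(i < n) x i by [].
rewrite (big_split_injective_image _ (fun i => nat_of_ord (x i)) g_inj).
rewrite (big_split_injective_image _ (fun i => nat_of_ord (switch x a g i)) g_inj).
congr (_ + _); last by apply: eq_bigr => i; rewrite inE => /switch_notin ->.
rewrite [RHS](eq_bigr (fun=> nat_of_ord a)); last by move=> k _; apply/eqP.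
rewrite (eq_bigr (fun k : 'I_omega => if k < a then omega else 0)); last first.
  by move=> k _; rewrite switch_image //; case: ifP; rewrite //= inordK.
by rewrite -big_mkcond big_ord_narrow ?(ltnW (ltn_ord a)) // !sum_nat_const !card_ord mulnC.
Qed.

Lemma value_count_switch x a g : switchable x a g ->
  value_count (switch x a g) omega <= value_count x omega + omega.
Proof.
case/and3P => _ /injectiveP g_inj _.
apply: leq_trans (_ : #|value_set x omega :|: g @: [set: 'I_omega]| <= _).
  apply/subset_leq_card/fintype.subsetP => i; rewrite finset.in_setU.
  have [i_img _|i_notin] := boolP (i \in g @: [set: 'I_omega]); first by apply/orP; right.
  by rewrite inE switch_notin // => x_i; apply/orP; left; rewrite inE.
apply: leq_trans (leq_card_setU _ _) _.
by rewrite leq_add // (leq_trans (leq_imset_card _ _)) // cardsT card_ord.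
Qed.

Definition switchings x : {set 'I_omega * {ffun 'I_omega -> 'I_n}} :=
  [set p | switchable x p.1 p.2].

Lemma card_switchings_ge x (v : nat) K : 0 < v < omega -> K <= value_count x v ->
  (K - omega) ^ omega <= #|switchings x|.
Proof.
move=> /andP[v_gt0 v_lt] K_le.
pose S := [set g : {ffun 'I_omega -> 'I_n} in ffun_on (mem (value_set x v)) | injectiveb g].
have card_S : #|S| = value_count x v ^_ omega by rewrite card_inj_ffuns_on card_ord.
apply: leq_trans (_ : (value_count x v - omega) ^ omega <= _).
  by rewrite leq_exp2r // leq_sub2r.
apply: leq_trans (expn_subn_leq_ffact _ _) _; rewrite -card_S.
have pair_inj : injective (pair (Ordinal v_lt) : {ffun 'I_omega -> 'I_n} -> _) by move=> ? ? [].
rewrite -(card_imset S pair_inj); apply/subset_leq_card/fintype.subsetP => p /imsetP[g].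
rewrite inE => /andP[/ffun_onP g_in g_inj] ->; rewrite inE /switchable /= v_gt0 g_inj /=.
by apply/forallP => k; have := g_in k; rewrite inE.
Qed.

Definition switch_fiber y : {set config m n * ('I_omega * {ffun 'I_omega -> 'I_n})} :=
  [set t | switchable t.1 t.2.1 t.2.2 && (switch t.1 t.2.1 t.2.2 == y)].

Lemma card_switch_fiber_le y : omega <= m ->
  #|switch_fiber y| <= omega * (value_count y omega * n ^ o).
Proof.
move=> omega_le_m.
have snd_inj : {in switch_fiber y &, injective snd}.
  move=> [x1 p1] [x2 p2]; rewrite !inE /= => /andP[sw1 /eqP y1] /andP[sw2 /eqP y2] p12.
  by rewrite -(switchK omega_le_m sw1) -(switchK omega_le_m sw2) y1 y2 p12.
rewrite -(card_in_imset snd_inj).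
apply: leq_trans (_ : #|finset.setX [set: 'I_omega]
                     [set g : {ffun 'I_omega -> 'I_n} | g ord0 \in value_set y omega]| <= _).
  apply/subset_leq_card/fintype.subsetP => _ /imsetP[[x [a g]] + ->].
  rewrite !inE /= => /andP[sw /eqP <-]; have /and3P[a_gt0 /injectiveP g_inj _] := sw.
  by rewrite switch_image // a_gt0 /= inordK.
rewrite cardsX cardsT card_ord leq_mul2l (leq_trans (card_ffun_ord0_in _ _)) ?orbT //.
by rewrite card_ord.
Qed.
End Switching.

Section Weights.
Local Open Scope ring_scope.
Variables (R : realType) (w : nat -> R) (o : nat).
Local Notation omega := o.+1.
Hypotheses (w_ge0 : forall k, 0 <= w k) (w0_gt0 : 0 < w 0%N) (womega_gt0 : 0 < w omega)
  (w_gt_omega : forall k, (omega < k)%N -> w k = 0).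

Definition weight_sum := \sum_(k < omega.+1) w k.
Definition weight_min := Num.min (w 0%N) (w omega).
Definition switch_cost := (weight_sum / weight_min) ^+ omega.

Lemma w_le_weight_sum k : w k <= weight_sum.
Proof.
have [/w_gt_omega ->|k_le] := ltnP omega k; first exact: sumr_ge0.
by rewrite /weight_sum (bigD1 (Ordinal (k_le : (k < omega.+1)%N))) //= lerDl sumr_ge0.
Qed.

Lemma weight_min_gt0 : 0 < weight_min.
Proof. by rewrite lt_min w0_gt0 womega_gt0. Qed.

Lemma switch_cost_ge0 : 0 <= switch_cost.
Proof. by rewrite exprn_ge0 // divr_ge0 ?sumr_ge0 ?(ltW weight_min_gt0). Qed.

Section Configs.
Variables m n : nat.
Implicit Types (x y : config m n) (a : 'I_omega) (g : {ffun 'I_omega -> 'I_n}).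

Lemma bweight_ge0 x : 0 <= bweight w x.
Proof. exact: prodr_ge0. Qed.

Lemma config_le_omega x : bweight w x != 0 -> forall i, (x i <= omega)%N.
Proof.
move=> wx_neq0 i; rewrite leqNgt; apply: contra wx_neq0 => /w_gt_omega wxi.
by rewrite /bweight (bigD1 i) //= wxi mul0r.
Qed.

Lemma bweight_switch_le x a g : (omega <= m)%N -> switchable x a g ->
  bweight w x <= switch_cost * bweight w (switch x a g).
Proof.
move=> omega_le_m /and3P[_ /injectiveP g_inj _]; rewrite /bweight.
rewrite (big_split_injective_image _ (fun i => w (x i)) g_inj).
rewrite (big_split_injective_image _ (fun i => w (switch x a g i)) g_inj).
set rest := \prod_(i in _) w (x i).
have -> : \prod_(i in ~: (g @: [set: 'I_omega])) w (switch x a g i) = rest.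
  by apply: eq_bigr => i; rewrite inE => /switch_notin ->.
have moved_le : \prod_(k < omega) w (x (g k)) <= weight_sum ^+ omega.
  rewrite -[X in _ <= _ ^+ X](card_ord omega) -prodr_const.
  by apply: ler_prod => k _; rewrite w_ge0 w_le_weight_sum.
have switched_ge : weight_min ^+ omega <= \prod_(k < omega) w (switch x a g (g k)).
  rewrite -[X in _ ^+ X <= _](card_ord omega) -prodr_const.
  apply: ler_prod => k _; rewrite (ltW weight_min_gt0) switch_image //=.
  by case: ifP => _; rewrite ?inordK // ge_min lexx ?orbT.
have sum_eq : weight_sum ^+ omega = switch_cost * weight_min ^+ omega.
  by rewrite /switch_cost expr_div_n divfK // expf_neq0 // lt0r_neq0 // weight_min_gt0.
have rest_ge0 : 0 <= rest by apply: prodr_ge0.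
apply: le_trans (ler_wpM2r rest_ge0 moved_le) _.
by rewrite sum_eq -mulrA ler_wpM2l ?switch_cost_ge0 // ler_wpM2r.
Qed.

Definition bad_config j x := [&& in_Bmn x, order_stat x j != omega & bweight w x != 0].

Lemma card_switchings_bad_ge j K x : (0 < j)%N -> (omega * j + omega * omega * K <= m)%N ->
  bad_config j x -> ((K - omega) ^ omega <= #|switchings o x|)%N.
Proof.
move=> j_gt0 m_ge /and3P[x_B os_neq wx_neq0]; have x_le := config_le_omega wx_neq0.
have cnt_lt := value_count_lt_order_stat j_gt0 x_le os_neq.
have [a a_range K_le] := frequent_intermediate_value (ltn0Sn o) x_le x_B cnt_lt m_ge.
exact: card_switchings_ge a_range K_le.
Qed.

Lemma card_bad_switch_fiber_le j y : (0 < j)%N -> (omega <= m)%N ->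
  (#|[set t in switch_fiber o y | bad_config j t.1]| <= omega * ((j + o) * n ^ o))%N.
Proof.
move=> j_gt0 omega_le_m; set E := [set t in _ | _].
have [->|[[x [a g]]]] := set_0Vmem E; first by rewrite cards0.
rewrite !inE /= => /andP[/andP[sw /eqP y_def] /and3P[_ os_neq wx_neq0]]; subst y.
have cnt_lt := value_count_lt_order_stat j_gt0 (config_le_omega wx_neq0) os_neq.
apply: leq_trans (_ : #|switch_fiber o (switch x a g)| <= _)%N.
  by apply/subset_leq_card/fintype.subsetP => t; rewrite inE => /andP[].
apply: leq_trans (card_switch_fiber_le _ omega_le_m) _; rewrite leq_mul // leq_mul //.
by apply: leq_trans (value_count_switch sw) _; rewrite addnS -addSn leq_add2r.
Qed.

Lemma bad_weight_le j K : (0 < j)%N -> (omega * j + omega * omega * K <= m)%N ->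
  (\sum_(x : config m n | in_Bmn x && (order_stat x j != omega)) bweight w x)
    * ((K - omega) ^ omega)%:R
  <= switch_cost * (omega * ((j + o) * n ^ o))%:R * Zpart w m n.
Proof.
move=> j_gt0 m_ge; have omega_le_m : (omega <= m)%N by nia.
have drop_null : \sum_(x : config m n | in_Bmn x && (order_stat x j != omega)) bweight w x
    = \sum_(x : config m n | bad_config j x) bweight w x.
  rewrite (bigID (fun x => bweight w x != 0)) /= [X in _ + X]big1 ?addr0.
    by apply: eq_bigl => x; rewrite /bad_config andbA.
  by move=> x /andP[_ /negPn /eqP].
have lower : (\sum_(x : config m n | bad_config j x) bweight w x) * ((K - omega) ^ omega)%:R
    <= \sum_(x : config m n | bad_config j x) \sum_(p in switchings o x) bweight w x.
  rewrite mulr_suml; apply: ler_sum => x x_bad.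
  rewrite sumr_const -[_ *+ #|_|]mulr_natr ler_wpM2l ?bweight_ge0 // ler_nat.
  exact: card_switchings_bad_ge j_gt0 m_ge x_bad.
have to_switched : \sum_(x : config m n | bad_config j x) \sum_(p in switchings o x) bweight w x
    <= switch_cost * \sum_(t | bad_config j t.1 && (t.2 \in switchings o t.1))
                       bweight w (switch t.1 t.2.1 t.2.2).
  rewrite pair_big_dep mulr_sumr; apply: ler_sum => t /andP[_]; rewrite inE.
  exact: bweight_switch_le.
have by_fibers : \sum_(t | bad_config j t.1 && (t.2 \in switchings o t.1))
    bweight w (switch t.1 t.2.1 t.2.2) <= (omega * ((j + o) * n ^ o))%:R * Zpart w m n.
  rewrite (partition_big (fun t => switch t.1 t.2.1 t.2.2) (fun y => in_Bmn y)) /=; last first.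
    by move=> t /andP[/and3P[x_B _ _]]; rewrite inE => sw; exact: switch_in_Bmn.
  rewrite /Zpart mulr_sumr; apply: ler_sum => y _.
  rewrite (eq_bigr (fun=> bweight w y)) => [|t /andP[_ /eqP ->] //].
  rewrite sumr_const -[_ *+ #|_|]mulr_natr mulrC ler_wpM2r ?bweight_ge0 // ler_nat.
  apply: leq_trans (card_bad_switch_fiber_le y j_gt0 omega_le_m).
  apply/subset_leq_card/fintype.subsetP => t /andP[/andP[t_bad]]; rewrite !inE => -> ->.
  by rewrite t_bad.
rewrite drop_null; apply: le_trans lower _; apply: le_trans to_switched _.
by rewrite -mulrA ler_wpM2l ?switch_cost_ge0.
Qed.
End Configs.

Lemma order_stat_neq_prob_le j q : (0 < j)%N -> (0 < q)%N ->
  exists C N0, forall m n, 0 < Zpart w m n -> (n <= q * m)%N -> (N0 <= n)%N ->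
    bprob w (fun y : config m n => order_stat y j != omega) <= C / n%:R.
Proof.
move=> j_gt0 q_gt0; set Q := (2 * omega * omega * q)%N.
have Q_gt0 : (0 < Q)%N by rewrite !muln_gt0 q_gt0.
exists (switch_cost * (omega * (j + o) * (2 * Q) ^ omega)%:R).
exists (2 * Q + 2 * q * (omega * j + omega * omega * omega))%N.
move=> m n Z_gt0 n_le_qm n_ge.
have n_gt0 : (0 < n)%N by apply: leq_trans n_ge; rewrite addn_gt0 muln_gt0 Q_gt0.
have nQ_gt0 : (0 < n %/ Q)%N by rewrite divn_gt0 //; apply: leq_trans n_ge; nia.
have n_le_2Q : (n <= 2 * Q * (n %/ Q))%N.
  by have := divn_eq n Q; have := ltn_pmod n Q_gt0; nia.
(* With K := omega + n %/ Q the pigeonhole step applies, and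
   (K - omega)^omega = (n %/ Q)^omega >= (n / 2Q)^omega. *)
have m_ge : (omega * j + omega * omega * (omega + n %/ Q) <= m)%N.
  rewrite -(leq_pmul2l q_gt0); apply: leq_trans n_le_qm.
  by have := leq_trunc_div n Q; rewrite /Q in n_ge *; nia.
have := bad_weight_le n j_gt0 m_ge; rewrite addKn.
set S := \sum_(x | _) _; set D := ((n %/ Q) ^ omega)%N => S_le.
have D_gt0 : 0 < D%:R :> R by rewrite ltr0n expn_gt0 nQ_gt0.
rewrite /bprob -/S ler_pdivrMr //; rewrite -ler_pdivlMr // mulrAC in S_le.
apply: le_trans S_le _; rewrite ler_wpM2r ?(ltW Z_gt0) // -!mulrA ler_wpM2l ?switch_cost_ge0 //.
rewrite ler_pdivrMr // mulrAC ler_pdivlMr ?ltr0n // -!natrM ler_nat.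
by rewrite -!mulnA !leq_mul2l -expnSr /D -expnMn leq_exp2r // n_le_2Q !orbT.
Qed.
End Weights.

Local Open Scope classical_set_scope.
Local Open Scope ring_scope.

Lemma bprobC (R : realType) (w : nat -> R) m n (P : config m n -> bool) :
  0 < Zpart w m n -> bprob w P = 1 - bprob w (fun y => ~~ P y).
Proof.
move=> Z_gt0; apply/eqP; rewrite eq_sym subr_eq /bprob -mulrDl.
by rewrite [X in X / _](_ : _ = Zpart w m n) ?divff ?lt0r_neq0 // /Zpart [RHS](bigID P).
Qed.

Lemma bprob_ge0 (R : realType) (w : nat -> R) m n (P : config m n -> bool) :
  (forall k, 0 <= w k) -> 0 <= Zpart w m n -> 0 <= bprob w P.
Proof. by move=> w_ge0 Z_ge0; rewrite divr_ge0 // sumr_ge0 // => y _; apply: prodr_ge0. Qed.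

Lemma Zpart_gt0_leq (R : realType) (w : nat -> R) (omega m n : nat) :
  (forall k, (omega < k)%N -> w k = 0) -> 0 < Zpart w m n -> (m <= omega * n)%N.
Proof.
move=> w_gt_omega; apply: contraTT; rewrite -ltnNge => m_gt.
rewrite /Zpart big1 ?ltxx // => x /eqP sum_x.
have [i omega_lt] : exists i, (omega < x i)%N.
  apply/existsP; apply: contraLR m_gt => /existsPn x_le.
  rewrite -leqNgt -sum_x -[X in (_ <= _ * X)%N](card_ord n) mulnC -sum_nat_const.
  by apply: leq_sum => i _; rewrite leqNgt x_le.
by rewrite /bweight (bigD1 i) //= w_gt_omega // mul0r.
Qed.

Lemma leq_mul_of_ratio_gt (R : realFieldType) (m n q : nat) (c : R) :
  0 < c -> 1 <= q%:R * c -> c < m%:R / n%:R -> (n <= q * m)%N.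
Proof.
move=> c_gt0 qc_ge1; have [->//|n_gt0] := posnP n.
rewrite -(ler_nat R) natrM ltr_pdivlMr ?ltr0n // => cn_lt_m.
apply: le_trans (_ : q%:R * (c * n%:R) <= _); last by rewrite ler_wpM2l // ltW.
by rewrite mulrA -[X in X <= _]mul1r ler_wpM2r.
Qed.

Lemma cvg_to0_of_le_inv (R : realType) (u : nat -> R) (N : nat -> nat) (C : R) :
  (forall N0, \forall k \near \oo, (N0 <= N k)%N) ->
  (\forall k \near \oo, 0 <= u k <= C / (N k)%:R) -> u @ \oo --> 0.
Proof.
move=> N_oo u_le; apply/cvgrPdist_le => eps eps_gt0.
have C_lt := truncnS_gt (C / eps).
apply: filterS2 u_le (N_oo (maxn (Num.truncn (C / eps)).+1 1)).
move=> k /andP[u_ge0 u_le_C]; rewrite geq_max => /andP[N_ge N_gt0].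
rewrite sub0r normrN ger0_norm //; apply: le_trans u_le_C _.
rewrite ler_pdivrMr ?ltr0n // mulrC -ler_pdivrMr //.
by apply: le_trans (ltW C_lt) _; rewrite ler_nat.
Qed.

Theorem theorem18p1 (R : realType) (w : nat -> R) (omega : nat)
  (w_ge0 : forall k, 0 <= w k) (w0_gt0 : 0 < w 0%N)
  (womega_gt0 : 0 < w omega) (w_gt_omega : forall k, (omega < k)%N -> w k = 0)
  (n m : nat -> nat) (lambda : R) (lambda_gt0 : 0 < lambda)
  (n_to_infty : forall N : nat, \forall k \near \oo, (N <= n k)%N)
  (ratio_cvg : (fun k : nat => ((m k)%:R / (n k)%:R : R)) @ \oo --> lambda)
  (Z_pos : forall k, 0 < Zpart w (m k) (n k)) :
  forall j : nat, (0 < j)%N ->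
    (fun k => @bprob R w (m k) (n k) (fun y => order_stat y j == omega)) @ \oo --> (1 : R).
Proof.
move=> j j_gt0.
have ratio_gt : \forall k \near \oo, lambda / 2 < (m k)%:R / (n k)%:R :> R.
  by apply: (cvgr_gt _ ratio_cvg); lra.
case: omega womega_gt0 w_gt_omega => [|o] womega_gt0 w_gt_omega.
  have [k] := filter_ex ratio_gt.
  have := Zpart_gt0_leq w_gt_omega (Z_pos k); rewrite mul0n leqn0 => /eqP ->.
  by rewrite mul0r; lra.
set q := (Num.truncn (2 / lambda)).+1.
have n_le_qm : \forall k \near \oo, (n k <= q * m k)%N.
  apply: filterS ratio_gt => k; apply: leq_mul_of_ratio_gt; first by rewrite divr_gt0.
  by rewrite -ler_pdivrMr ?divr_gt0 // invf_div mul1r; exact/ltW/truncnS_gt.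
have [C [N0 prob_le]] :=
  order_stat_neq_prob_le w_ge0 w0_gt0 womega_gt0 w_gt_omega j_gt0 (ltn0Sn _ : (0 < q)%N).
have bad_to0 :
    (fun k => bprob w (fun y : config (m k) (n k) => order_stat y j != o.+1)) @ \oo --> 0.
  apply: (cvg_to0_of_le_inv n_to_infty (C := C)).
  apply: filterS2 n_le_qm (n_to_infty N0) => k n_le N0_le.
  by rewrite bprob_ge0 ?(ltW (Z_pos k)) // prob_le.
rewrite (funext (fun k => bprobC _ (Z_pos k))) -[X in _ --> X](subr0 1).
exact: cvgB (cvg_cst _) bad_to0.
Qed.
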